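(* Let $L$ be a category, $C:L\to\mathbf{Pos}$ an interpretation (resp. a normal interpretation), $\{A(a)\}_{a\in\mathrm{Obj}(L)}$ a family of posets, and $G=\{(\alpha_a:C(a)\to A(a),\ \gamma_a:A(a)\to C(a))\}_{a}$ a family of Galois connections $\alpha_a\dashv\gamma_a$ (resp. Galois insertions). Define $C^G(a)=A(a)$ and, for $f:a\to b$ in $L$, $C^G(f)=\alpha_b\circ C(f)\circ\gamma_a$. Then: (i) $C^G:L\to\mathbf{Pos}$ is an interpretation (resp. a normal interpretation). (ii) $\gamma=\{\gamma_a\}$ is a concretization of interpretation from $C^G$ to $C$; moreover, for every interpretation $A':L\to\mathbf{Pos}$ with $A'(a)=A(a)$ for all $a$, if $\gamma$ is a concretization of interpretation from $A'$ to $C$, then $C^G\le A'$. (iii) $\alpha=\{\alpha_a\}$ is an abstraction of interpretation from $C$ to $C^G$; moreover, for every interpretation $A'$ with $A'(a)=A(a)$ for all $a$, if $\alpha$ is an abstraction of interpretation from $C$ to $A'$, then $C^G\le A'$.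
   Context: $\mathbf{Pos}$ is the category of posets and monotone maps; monotone maps $X\to Y$ are ordered pointwise. An interpretation $F:L\to\mathbf{Pos}$ (oplax functor) consists of a poset $F(a)$ for each object $a$ and a monotone map $F(f):F(a)\to F(b)$ for each morphism $f:a\to b$, such that $F(\mathrm{id}_a)\le\mathrm{id}_{F(a)}$ and $F(g\circ f)\le F(g)\circ F(f)$. It is normal if $F(\mathrm{id}_a)=\mathrm{id}_{F(a)}$. For interpretations $F,G$, $F\le G$ means $F(a)=G(a)$ for all objects $a$ and $F(f)\le G(f)$ for all morphisms $f$. A Galois connection $\alpha\dashv\gamma$ between posets $C$ and $A$ is a pair of monotone maps $\alpha:C\to A$, $\gamma:A\to C$ with $\alpha(c)\le a\iff c\le\gamma(a)$; it is a Galois insertion if moreover $\alpha\circ\gamma=\mathrm{id}$. Given interpretations $A,C$, a family of monotone maps $\gamma_a:A(a)\to C(a)$ is a concretization of interpretation from $A$ to $C$ if $C(f)\circ\gamma_a\le\gamma_b\circ A(f)$ for all $f:a\to b$; a family $\alpha_a:C(a)\to A(a)$ is an abstraction of interpretation from $C$ to $A$ if $\alpha_b\circ C(f)\le A(f)\circ\alpha_a$ for all $f:a\to b$. *)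

Record Category := {
  Obj : Type;
  Hom : Obj -> Obj -> Type;
  cid : forall a, Hom a a;
  comp : forall a b c, Hom b c -> Hom a b -> Hom a c;  (* comp g f = g o f *)
  comp_id_l : forall a b (f : Hom a b), comp a b b (cid b) f = f;
  comp_id_r : forall a b (f : Hom a b), comp a a b f (cid a) = f;
  comp_assoc : forall a b c d (h : Hom c d) (g : Hom b c) (f : Hom a b),
      comp a c d h (comp a b c g f) = comp a b d (comp b c d h g) f
}.
Arguments cid {c0} a : rename.
Arguments comp {c0 a b c} g f : rename.

Record Poset := {
  carrier :> Type;
  le : carrier -> carrier -> Prop;
  le_refl : forall x, le x x;
  le_trans : forall x y z, le x y -> le y z -> le x z;
  le_antisym : forall x y, le x y -> le y x -> x = y
}.
Arguments le {p} x y.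

Definition monotone (X Y : Poset) (f : X -> Y) : Prop :=
  forall x y, le x y -> le (f x) (f y).

Definition fle (X Y : Poset) (f g : X -> Y) : Prop := forall x, le (f x) (g x).

(** An interpretation F : L -> Pos (oplax functor), given by its object part
    P and its morphism part Fm. *)
Definition is_interpretation (L : Category) (P : Obj L -> Poset)
  (Fm : forall a b, Hom L a b -> P a -> P b) : Prop :=
  (forall a b (f : Hom L a b), monotone (P a) (P b) (Fm a b f)) /\
  (forall a, fle (P a) (P a) (Fm a a (cid a)) (fun x => x)) /\
  (forall a b c (f : Hom L a b) (g : Hom L b c),
      fle (P a) (P c) (Fm a c (comp g f)) (fun x => Fm b c g (Fm a b f x))).

Definition is_normal_interpretation (L : Category) (P : Obj L -> Poset)
  (Fm : forall a b, Hom L a b -> P a -> P b) : Prop :=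
  is_interpretation L P Fm /\ (forall a (x : P a), Fm a a (cid a) x = x).

Definition interp_le (L : Category) (P : Obj L -> Poset)
  (Fm Gm : forall a b, Hom L a b -> P a -> P b) : Prop :=
  forall a b (f : Hom L a b), fle (P a) (P b) (Fm a b f) (Gm a b f).

Definition galois_connection (C A : Poset) (alpha : C -> A) (gamma : A -> C) : Prop :=
  monotone C A alpha /\ monotone A C gamma /\
  (forall (c : C) (a : A), le (alpha c) a <-> le c (gamma a)).

Definition galois_insertion (C A : Poset) (alpha : C -> A) (gamma : A -> C) : Prop :=
  galois_connection C A alpha gamma /\ (forall a : A, alpha (gamma a) = a).

Definition concretization (L : Category) (PA PC : Obj L -> Poset)
  (Am : forall a b, Hom L a b -> PA a -> PA b)
  (Cm : forall a b, Hom L a b -> PC a -> PC b)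
  (gamma : forall a, PA a -> PC a) : Prop :=
  (forall a, monotone (PA a) (PC a) (gamma a)) /\
  (forall a b (f : Hom L a b),
     fle (PA a) (PC b) (fun x => Cm a b f (gamma a x)) (fun x => gamma b (Am a b f x))).

Definition abstraction (L : Category) (PC PA : Obj L -> Poset)
  (Cm : forall a b, Hom L a b -> PC a -> PC b)
  (Am : forall a b, Hom L a b -> PA a -> PA b)
  (alpha : forall a, PC a -> PA a) : Prop :=
  (forall a, monotone (PC a) (PA a) (alpha a)) /\
  (forall a b (f : Hom L a b),
     fle (PC a) (PA b) (fun x => alpha b (Cm a b f x)) (fun x => Am a b f (alpha a x))).

Definition induced_interp (L : Category) (PC PA : Obj L -> Poset)
  (Cm : forall a b, Hom L a b -> PC a -> PC b)
  (alpha : forall a, PC a -> PA a) (gamma : forall a, PA a -> PC a) :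
  forall a b, Hom L a b -> PA a -> PA b :=
  fun a b f x => alpha b (Cm a b f (gamma a x)).


(* Everything follows from the two elementary inequalities of a Galois
   connection, id <= gamma o alpha (unit) and alpha o gamma <= id (counit):
   - C^G is lax in identities because C(id) <= id and alpha o gamma <= id,
     and lax in composites because the unit may be inserted between C(g)
     and C(f); for Galois insertions alpha o gamma = id gives normality;
   - gamma is a concretization from C^G to C by the unit, and any
     concretization A' from A to C satisfies C^G <= A' by the adjunction;
   - alpha is an abstraction from C to C^G by the unit, and any abstraction
     A' from C to A satisfies C^G <= A' by the counit. *)

Section GaloisConnection.

Context {C A : Poset} {alpha : C -> A} {gamma : A -> C}.
Hypothesis Hgc : galois_connection C A alpha gamma.

Lemma gc_alpha_monotone : monotone C A alpha.
Proof. exact (proj1 Hgc). Qed.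

Lemma gc_gamma_monotone : monotone A C gamma.
Proof. exact (proj1 (proj2 Hgc)). Qed.

Lemma gc_adjoint_right (c : C) (a : A) : le (alpha c) a -> le c (gamma a).
Proof. apply (proj2 (proj2 Hgc)). Qed.

Lemma gc_adjoint_left (c : C) (a : A) : le c (gamma a) -> le (alpha c) a.
Proof. apply (proj2 (proj2 Hgc)). Qed.

Lemma gc_unit (c : C) : le c (gamma (alpha c)).
Proof. apply gc_adjoint_right, le_refl. Qed.

Lemma gc_counit (a : A) : le (alpha (gamma a)) a.
Proof. apply gc_adjoint_left, le_refl. Qed.

End GaloisConnection.

Section InducedInterpretation.

Context {L : Category} {PC PA : Obj L -> Poset}.
Context {Cm : forall a b, Hom L a b -> PC a -> PC b}.
Context {alpha : forall a, PC a -> PA a} {gamma : forall a, PA a -> PC a}.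
Hypothesis HG : forall a, galois_connection (PC a) (PA a) (alpha a) (gamma a).

Let CG := induced_interp L PC PA Cm alpha gamma.

Lemma induced_is_interpretation :
  is_interpretation L PC Cm -> is_interpretation L PA CG.
Proof.
  intros [HCmono [HCid HCcomp]]. unfold CG, induced_interp.
  split; [|split].
  - intros a b f x y Hxy.
    apply (gc_alpha_monotone (HG b)), HCmono.
    apply (gc_gamma_monotone (HG a)), Hxy.
  - intros a x. eapply le_trans; [|apply (gc_counit (HG a))].
    apply (gc_alpha_monotone (HG a)), HCid.
  - intros a b c f g x. apply (gc_alpha_monotone (HG c)).
    eapply le_trans; [apply HCcomp|].
    apply HCmono, (gc_unit (HG b)).
Qed.

Lemma induced_is_normal_interpretation :
  is_normal_interpretation L PC Cm ->
  (forall a, galois_insertion (PC a) (PA a) (alpha a) (gamma a)) ->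
  is_normal_interpretation L PA CG.
Proof.
  intros [HC HCid] Hins. split; [exact (induced_is_interpretation HC)|].
  intros a x. unfold CG, induced_interp. rewrite HCid. apply (proj2 (Hins a)).
Qed.

Lemma gamma_concretization : concretization L PA PC CG Cm gamma.
Proof.
  split; [intro a; exact (gc_gamma_monotone (HG a))|].
  intros a b f x. apply (gc_unit (HG b)).
Qed.

(* Part (ii), minimality: C^G lies below every Am for which gamma is a
   concretization; no interpretation axiom on Am is needed. *)
Lemma induced_least_concretization (Am : forall a b, Hom L a b -> PA a -> PA b) :
  concretization L PA PC Am Cm gamma -> interp_le L PA CG Am.
Proof.
  intros [_ Hconc] a b f x.
  apply (gc_adjoint_left (HG b)), Hconc.
Qed.

Lemma alpha_abstraction :
  (forall a b (f : Hom L a b), monotone (PC a) (PC b) (Cm a b f)) ->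
  abstraction L PC PA Cm CG alpha.
Proof.
  intros HCmono.
  split; [intro a; exact (gc_alpha_monotone (HG a))|].
  intros a b f y. unfold CG, induced_interp.
  apply (gc_alpha_monotone (HG b)), HCmono, (gc_unit (HG a)).
Qed.

Lemma induced_least_abstraction (Am : forall a b, Hom L a b -> PA a -> PA b) :
  (forall a b (f : Hom L a b), monotone (PA a) (PA b) (Am a b f)) ->
  abstraction L PC PA Cm Am alpha -> interp_le L PA CG Am.
Proof.
  intros HAmono [_ Habs] a b f x.
  eapply le_trans; [apply Habs|].
  apply HAmono, (gc_counit (HG a)).
Qed.

End InducedInterpretation.

Theorem mainTheorem5 (L : Category) (PC : Obj L -> Poset)
  (Cm : forall a b, Hom L a b -> PC a -> PC b)
  (PA : Obj L -> Poset)
  (alpha : forall a, PC a -> PA a) (gamma : forall a, PA a -> PC a) :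
  is_interpretation L PC Cm ->
  (forall a, galois_connection (PC a) (PA a) (alpha a) (gamma a)) ->
  (* (i) *)
  is_interpretation L PA (induced_interp L PC PA Cm alpha gamma) /\
  (* (i), "resp." normal case *)
  (is_normal_interpretation L PC Cm ->
   (forall a, galois_insertion (PC a) (PA a) (alpha a) (gamma a)) ->
   is_normal_interpretation L PA (induced_interp L PC PA Cm alpha gamma)) /\
  (* (ii) *)
  (concretization L PA PC (induced_interp L PC PA Cm alpha gamma) Cm gamma /\
   forall Am : forall a b, Hom L a b -> PA a -> PA b,
     is_interpretation L PA Am ->
     concretization L PA PC Am Cm gamma ->
     interp_le L PA (induced_interp L PC PA Cm alpha gamma) Am) /\
  (* (iii) *)
  (abstraction L PC PA Cm (induced_interp L PC PA Cm alpha gamma) alpha /\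
   forall Am : forall a b, Hom L a b -> PA a -> PA b,
     is_interpretation L PA Am ->
     abstraction L PC PA Cm Am alpha ->
     interp_le L PA (induced_interp L PC PA Cm alpha gamma) Am).
Proof.
  intros HC HG.
  split; [exact (induced_is_interpretation HG HC)|].
  split; [exact (induced_is_normal_interpretation HG)|].
  split; split.
  - exact (gamma_concretization HG).
  - intros Am _. exact (induced_least_concretization HG Am).
  - exact (alpha_abstraction HG (proj1 HC)).
  - intros Am HAm. exact (induced_least_abstraction HG Am (proj1 HAm)).
Qed.
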